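(* Let $h>0$ satisfy $L_eh^2\le1/9$, where $L_e=L+2\epsilon\tilde L$. For $x,v\in\mathbb{R}^{Nd}$ and $\mathcal U_0\sim\mathrm{Unif}[0,1]$, let $Q_h(x,v)=x+hv-\frac{h^2}2\nabla U(x+h\mathcal U_0v)$ and $P_h(x,v)=v-h\nabla U(x+h\mathcal U_0v)$ (one step of the randomized integrator). Then $$\sum_{\ell=1}^N\big|\!\big|\!\big|\mathbb{E}[(Q^\ell_h(x,v),P^\ell_h(x,v))]-(q^\ell_h(x,v),p^\ell_h(x,v))\big|\!\big|\!\big|^2\le7(L_eh^2)^3\sum_{\ell=1}^N\Big(|\!|\!|(x^\ell,v^\ell)|\!|\!|^2+\frac13L_e^{-2}\epsilon^2\mathbf W_0^2\Big),$$ where $\mathbf W_0=|\nabla_1W(0,0)|$.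
   Context: Standing assumptions: $\epsilon\ge0$; $V:\mathbb{R}^d\to\mathbb{R}$, $W:\mathbb{R}^d\times\mathbb{R}^d\to\mathbb{R}$ are $C^1$, $\nabla_1W$ the gradient in the first argument, constants $L>0$, $\tilde L\ge0$ with: (a) $V(0)=0$, $V\ge0$; (b) $|\nabla V(x)-\nabla V(y)|\le L|x-y|$; (d) $W$ symmetric, $|\nabla_1W(x,y)-\nabla_1W(\tilde x,\tilde y)|\le\tilde L(|x-\tilde x|+|y-\tilde y|)$. Points of $\mathbb{R}^{Nd}$: $x=(x^1,\dots,x^N)$. $U(x)=\sum_i\big(V(x^i)+\frac\epsilon{2N}\sum_jW(x^i,x^j)\big)$, $\nabla U=(\nabla_1U,\dots,\nabla_NU)$ with $\nabla_iU=\partial U/\partial x^i$. Exact flow $(q_t,p_t)(x,v)$: $\dot q^i_t=p^i_t$, $\dot p^i_t=-\nabla_iU(q_t)$, $(q_0,p_0)=(x,v)$. For $(a,b)\in\mathbb{R}^{2d}$, $|\!|\!|(a,b)|\!|\!|^2=|a|^2+L_e^{-1}|b|^2$. *)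

From Stdlib Require Import Reals.
From Coquelicot Require Import Coquelicot.
From mathcomp Require Import ssreflect ssrfun ssrbool eqtype ssrnat seq fintype bigop.

Set Implicit Arguments.
Unset Strict Implicit.
Local Open Scope R_scope.

Definition vec (d : nat) := 'I_d -> R.
(* points of R^{Nd} = (R^d)^N, x = (x^1,...,x^N) *)
Definition config (N d : nat) := 'I_N -> vec d.

Definition rsum (n : nat) (f : 'I_n -> R) : R := \big[Rplus/0]_(k < n) f k.

Definition vsub d (a b : vec d) : vec d := fun k => a k - b k.
Definition vzero d : vec d := fun _ => 0.

Definition sqnorm d (a : vec d) : R := rsum (fun k => a k ^ 2).
Definition enorm d (a : vec d) : R := sqrt (sqnorm a).

Definition tnorm2 d (Le : R) (a b : vec d) : R := sqnorm a + / Le * sqnorm b.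

Definition shift d (x : vec d) (k : 'I_d) (t : R) : vec d :=
  fun j => if j == k then x j + t else x j.
Definition partial d (f : vec d -> R) (x : vec d) (k : 'I_d) : R :=
  Derive (fun t => f (shift x k t)) 0.
Definition grad d (f : vec d -> R) (x : vec d) : vec d := fun k => partial f x k.

Definition grad1 d (W : vec d -> vec d -> R) (x y : vec d) : vec d :=
  grad (fun z => W z y) x.
Definition grad2 d (W : vec d -> vec d -> R) (x y : vec d) : vec d :=
  grad (fun z => W x z) y.

Definition isC1 d (f : vec d -> R) : Prop :=
  (forall x k, ex_derive (fun t => f (shift x k t)) 0) /\
  (forall x eps, 0 < eps -> exists delta, 0 < delta /\
     forall y, enorm (vsub y x) < delta -> enorm (vsub (grad f y) (grad f x)) < eps).

Definition isC1_2 d (W : vec d -> vec d -> R) : Prop :=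
  (forall x y k, ex_derive (fun t => W (shift x k t) y) 0) /\
  (forall x y k, ex_derive (fun t => W x (shift y k t)) 0) /\
  (forall x y eps, 0 < eps -> exists delta, 0 < delta /\
     forall x' y', enorm (vsub x' x) + enorm (vsub y' y) < delta ->
       enorm (vsub (grad1 W x' y') (grad1 W x y)) < eps /\
       enorm (vsub (grad2 W x' y') (grad2 W x y)) < eps).

Definition Upot N d (eps : R) (V : vec d -> R) (W : vec d -> vec d -> R)
  (x : config N d) : R :=
  rsum (fun i => V (x i) + eps / (2 * INR N) * rsum (fun j => W (x i) (x j))).

Definition cshift N d (x : config N d) (i : 'I_N) (k : 'I_d) (t : R) : config N d :=
  fun i' k' => if (i' == i) && (k' == k) then x i' k' + t else x i' k'.
Definition cgrad N d (f : config N d -> R) (x : config N d) : config N d :=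
  fun i k => Derive (fun t => f (cshift x i k t)) 0.

Definition caxpy N d (x : config N d) (c : R) (v : config N d) : config N d :=
  fun i k => x i k + c * v i k.

(* the exact Hamiltonian flow (q_t,p_t)(x,v) (any solution on R of the ODE) *)
Definition is_flow N d (gU : config N d -> config N d)
  (x v : config N d) (q p : R -> config N d) : Prop :=
  (forall i k, q 0 i k = x i k) /\ (forall i k, p 0 i k = v i k) /\
  (forall t i k, is_derive (fun s => q s i k) t (p t i k)) /\
  (forall t i k, is_derive (fun s => p s i k) t (- gU (q t) i k)).

(* expectations over U0 ~ Unif[0,1] of the randomized integrator step *)
Definition EQh N d (gU : config N d -> config N d) (h : R) (x v : config N d)
  : config N d :=
  fun l k => RInt (fun u => x l k + h * v l k
                             - h ^ 2 / 2 * gU (caxpy x (h * u) v) l k) 0 1.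
Definition EPh N d (gU : config N d -> config N d) (h : R) (x v : config N d)
  : config N d :=
  fun l k => RInt (fun u => v l k - h * gU (caxpy x (h * u) v) l k) 0 1.

From Stdlib Require Import Reals Lra FunctionalExtensionality.
From Coquelicot Require Import Coquelicot.
From mathcomp Require Import ssreflect ssrfun ssrbool eqtype ssrnat seq fintype bigop.
From HB Require Import structures.
Local Open Scope R_scope.
Set Implicit Arguments.
Unset Strict Implicit.

(* Write F = grad U and Le = L + 2 eps Lt. By symmetry of W,
   F_i(y) = grad V(y^i) + (eps/N) sum_j grad_1 W(y^i, y^j), so each row of F moves by at most
   (L + eps Lt)|y^i - z^i| + (eps Lt / N) sum_j |y^j - z^j|, hence F is Le-Lipschitz on R^{Nd};
   and |F(0)| = sqrt N eps W0 because grad V(0) = 0 at the minimum of V.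
   Averaging over U0 gives exactly E[P_h] = v - Phi(h) and E[Q_h] = x + h v - (h/2) Phi(h),
   where Phi(t) = int_0^t F(x + s v) ds. Along the flow, M = max_[0,h] |q_s - x| bounds
   |F(q_s)| by A = Le (|x| + M) + |F(0)|, and mean-value inequalities then give
   |q_s - x - s v| <= A s^2/2, |E[P_h] - p_h| <= Le A h^3/6 and
   |E[Q_h] - q_h| <= Le A h^4/24 + Le |v| h^3/12, while M <= A h^2/2 + h |v| closes the
   bootstrap. With Le h^2 <= 1/9 these bounds combine into the constant 7. *)

HB.instance Definition _ := Monoid.isComLaw.Build R 0 Rplus
  (fun a b c => esym (Rplus_assoc a b c)) Rplus_comm Rplus_0_l.

(** * Finite sums and Euclidean norms *)

Section FiniteSums.
Variable n : nat.
Implicit Types f g : 'I_n -> R.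

Lemma rsum_ext f g : (forall j, f j = g j) -> rsum f = rsum g.
Proof. by move=> fg; apply: eq_bigr => j _. Qed.

Lemma rsum_delta (i : 'I_n) f : rsum (fun j => if j == i then f j else 0) = f i.
Proof. by rewrite /rsum (bigD1 i) //= eqxx big1 ?Rplus_0_r // => j /negPf ->. Qed.

Lemma rsum_plus f g : rsum (fun j => f j + g j) = rsum f + rsum g.
Proof. exact: big_split. Qed.

Lemma rsum_scal c f : rsum (fun j => c * f j) = c * rsum f.
Proof.
apply: (big_rec2 (fun s1 s2 => s1 = c * s2)); first ring.
by move=> i s1 s2 _ ->; ring.
Qed.

Lemma rsum_minus f g : rsum (fun j => f j - g j) = rsum f - rsum g.
Proof.
rewrite (_ : rsum f - rsum g = rsum f + -1 * rsum g); last ring.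
by rewrite -rsum_scal -rsum_plus; apply: rsum_ext => j; ring.
Qed.

Lemma rsum_const c : rsum (fun _ : 'I_n => c) = INR n * c.
Proof.
rewrite /rsum big_const_ord; elim: n => [|m IH] /=; first ring.
by rewrite IH; case: m {IH} => [|m] /=; ring.
Qed.

Lemma rsum_le f g : (forall j, f j <= g j) -> rsum f <= rsum g.
Proof.
move=> fg; apply: (big_rec2 (fun s1 s2 => s1 <= s2)); first lra.
by move=> i s1 s2 _; have := fg i; lra.
Qed.

Lemma rsum_ge0 f : (forall j, 0 <= f j) -> 0 <= rsum f.
Proof. by move=> f0; have := @rsum_le (fun _ => 0) f f0; rewrite rsum_const Rmult_0_r. Qed.

Lemma is_derive_rsum (F : 'I_n -> R -> R) (l : 'I_n -> R) t :
  (forall j, is_derive (F j) t (l j)) ->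
  is_derive (fun s => rsum (fun j => F j s)) t (rsum l).
Proof.
move=> dF; rewrite /rsum; elim: (index_enum _) => [|j r IH].
  rewrite big_nil; apply: (is_derive_ext (fun _ => 0)); last exact: is_derive_const.
  by move=> s; rewrite big_nil.
rewrite big_cons; apply: (is_derive_ext (fun s => F j s + \big[Rplus/0]_(i <- r) F i s)).
  by move=> s; rewrite big_cons.
exact: is_derive_plus.
Qed.

End FiniteSums.

Lemma quadratic_nonneg_discr A B C :
  0 <= B -> (forall s, 0 <= A + 2 * s * C + s ^ 2 * B) -> C ^ 2 <= A * B.
Proof.
move=> B0 nonneg; case: (Rle_lt_or_eq_dec _ _ B0) => [Bpos|B0eq]; last subst B.
  have := nonneg (- C / B).
  have -> : A + 2 * (- C / B) * C + (- C / B) ^ 2 * B = (A * B - C ^ 2) / B by field; lra.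
  move=> H; have : 0 <= (A * B - C ^ 2) / B * B by apply: Rmult_le_pos; lra.
  by rewrite /Rdiv Rmult_assoc Rinv_l; lra.
case: (Req_dec C 0) => [-> | C0]; first nra.
have := nonneg (- (A + 1) / (2 * C)).
have -> : A + 2 * (- (A + 1) / (2 * C)) * C + (- (A + 1) / (2 * C)) ^ 2 * 0 = -1 by field.
lra.
Qed.

Lemma sqrt_pow2_abs x : sqrt (x ^ 2) = Rabs x.
Proof. by rewrite -(pow2_abs x) sqrt_pow2 //; apply: Rabs_pos. Qed.

Section EuclideanNorm.
Variable n : nat.
Implicit Types a b : vec n.

Lemma sqnorm_ge0 a : 0 <= sqnorm a.
Proof. by apply: rsum_ge0 => j; apply: pow2_ge_0. Qed.

Lemma enorm_ge0 a : 0 <= enorm a.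
Proof. exact: sqrt_pos. Qed.

Lemma enorm_sq a : enorm a ^ 2 = sqnorm a.
Proof. by rewrite pow2_sqrt //; apply: sqnorm_ge0. Qed.

Lemma enorm_ext a b : (forall k, a k = b k) -> enorm a = enorm b.
Proof.
by move=> ab; rewrite /enorm /sqnorm (rsum_ext (g := fun k => b k ^ 2)) // => k; rewrite ab.
Qed.

Lemma enorm_dot a b : rsum (fun k => a k * b k) <= enorm a * enorm b.
Proof.
set C := rsum _.
have CS : C ^ 2 <= sqnorm a * sqnorm b.
  apply: quadratic_nonneg_discr => [|s]; first exact: sqnorm_ge0.
  have -> : sqnorm a + 2 * s * C + s ^ 2 * sqnorm b = sqnorm (fun k => a k + s * b k).
    rewrite /sqnorm /C -!rsum_scal -!rsum_plus; apply: rsum_ext => k; ring.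
  exact: sqnorm_ge0.
case: (Rle_or_lt C 0) => [Cle0|Cpos].
  by have := Rmult_le_pos _ _ (enorm_ge0 a) (enorm_ge0 b); lra.
rewrite /enorm -sqrt_mult; try exact: sqnorm_ge0.
by have := sqrt_le_1_alt _ _ CS; rewrite sqrt_pow2; lra.
Qed.

Lemma enorm_triangle a b : enorm (fun k => a k + b k) <= enorm a + enorm b.
Proof.
have a0 := enorm_ge0 a; have b0 := enorm_ge0 b.
rewrite {1}/enorm -(sqrt_pow2 (enorm a + enorm b)); last lra.
apply: sqrt_le_1_alt.
have -> : sqnorm (fun k => a k + b k) = sqnorm a + 2 * rsum (fun k => a k * b k) + sqnorm b.
  rewrite /sqnorm -rsum_scal -!rsum_plus; apply: rsum_ext => k; ring.
by have := enorm_dot a b; rewrite -(enorm_sq a) -(enorm_sq b); nra.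
Qed.

Lemma enorm_scal c a : enorm (fun k => c * a k) = Rabs c * enorm a.
Proof.
rewrite /enorm /sqnorm (rsum_ext (g := fun k => c ^ 2 * a k ^ 2)) => [|k]; last ring.
by rewrite rsum_scal sqrt_mult ?sqrt_pow2_abs //; [apply: pow2_ge_0 | apply: sqnorm_ge0].
Qed.

Lemma enorm_const c : enorm (fun _ : 'I_n => c) = sqrt (INR n) * Rabs c.
Proof.
rewrite /enorm /sqnorm rsum_const sqrt_mult ?sqrt_pow2_abs //.
- exact: pos_INR.
- exact: pow2_ge_0.
Qed.

Lemma enorm_coord a k : Rabs (a k) <= enorm a.
Proof.
rewrite -sqrt_pow2_abs; apply: sqrt_le_1_alt.
rewrite -(rsum_delta k (fun j => a j ^ 2)); apply: rsum_le => j.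
by case: (j == k); [lra | apply: pow2_ge_0].
Qed.

Lemma enorm_mono a b : (forall k, 0 <= a k <= b k) -> enorm a <= enorm b.
Proof. by move=> ab; apply/sqrt_le_1_alt/rsum_le => k; apply: pow_incr. Qed.

Lemma enorm_sum m (f : 'I_m -> vec n) :
  enorm (fun k => rsum (fun j => f j k)) <= rsum (fun j => enorm (f j)).
Proof.
rewrite /rsum; elim: (index_enum _) => [|j r IH].
  rewrite big_nil (enorm_ext (b := fun _ => 0)) => [|k]; last by rewrite big_nil.
  by rewrite enorm_const Rabs_R0; lra.
rewrite big_cons (enorm_ext (b := fun k => f j k + \big[Rplus/0]_(i <- r) f i k)).
  by apply: Rle_trans (enorm_triangle _ _) _; apply: Rplus_le_compat_l.
by move=> k; rewrite big_cons.
Qed.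

Lemma rsum_le_sqrt_enorm a : rsum a <= sqrt (INR n) * enorm a.
Proof.
have := enorm_dot (fun _ => 1) a.
rewrite enorm_const Rabs_R1 Rmult_1_r (rsum_ext (g := a)) // => k; ring.
Qed.

Lemma enorm_add_mean_le (a c : R) (e : vec n) : 0 <= a -> 0 <= c -> (forall i, 0 <= e i) ->
  enorm (fun i => a * e i + c / INR n * rsum e) <= (a + c) * enorm e.
Proof.
move=> a0 c0 e0; have S0 := rsum_ge0 e0; have e_ge0 := enorm_ge0 e.
have cn0 : 0 <= c / INR n.
  by case: (Req_dec (INR n) 0) => [->|n0]; [rewrite Rdiv_0_r; lra
    | apply: Rdiv_le_0_compat => //; have := pos_INR n; lra].
have mean_le : sqrt (INR n) * (c / INR n * rsum e) <= c * enorm e.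
  case: (Req_dec (INR n) 0) => [->|n0]; first by rewrite sqrt_0 Rmult_0_l; nra.
  have := Rmult_le_compat_l (sqrt (INR n) * (c / INR n)) _ _
    (Rmult_le_pos _ _ (sqrt_pos _) cn0) (rsum_le_sqrt_enorm e).
  rewrite (_ : _ * (_ * enorm e) = c / INR n * (sqrt (INR n) * sqrt (INR n)) * enorm e); last ring.
  rewrite sqrt_sqrt; last exact: pos_INR.
  by rewrite (_ : c / INR n * INR n = c); [lra | field].
apply: Rle_trans (enorm_triangle _ _) _.
by rewrite enorm_scal enorm_const !Rabs_pos_eq //; nra.
Qed.

End EuclideanNorm.

Definition cnorm N d (y : config N d) : R := enorm (fun i => enorm (y i)).
Definition cdot N d (y z : config N d) : R := rsum (fun i => rsum (fun k => y i k * z i k)).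
Definition csub N d (y z : config N d) : config N d := fun i k => y i k - z i k.

Section ConfigNorm.
Variables N d : nat.
Implicit Types y z : config N d.

Lemma cnorm_ge0 y : 0 <= cnorm y.
Proof. exact: enorm_ge0. Qed.

Lemma cnorm_sq y : cnorm y ^ 2 = cdot y y.
Proof. by rewrite enorm_sq; apply: rsum_ext => i; rewrite enorm_sq; apply: rsum_ext => k; ring. Qed.

Lemma cnorm_ext y z : (forall i k, y i k = z i k) -> cnorm y = cnorm z.
Proof. by move=> yz; apply: enorm_ext => i; apply: enorm_ext. Qed.

Lemma cnorm_triangle y z : cnorm (fun i k => y i k + z i k) <= cnorm y + cnorm z.
Proof.
apply: Rle_trans (enorm_triangle _ _).
by apply: enorm_mono => i; split; [apply: enorm_ge0 | apply: enorm_triangle].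
Qed.

Lemma cnorm_scal c y : cnorm (fun i k => c * y i k) = Rabs c * cnorm y.
Proof.
rewrite /cnorm (enorm_ext (b := fun i => Rabs c * enorm (y i))) => [|i]; last exact: enorm_scal.
by rewrite enorm_scal Rabs_Rabsolu.
Qed.

Lemma cnorm_coord y i k : Rabs (y i k) <= cnorm y.
Proof.
apply: Rle_trans (enorm_coord _ k) _.
have := enorm_coord (fun i => enorm (y i)) i.
by rewrite Rabs_pos_eq //; apply: enorm_ge0.
Qed.

Lemma cdot_le y z : cdot y z <= cnorm y * cnorm z.
Proof. by apply: Rle_trans (enorm_dot _ _); apply: rsum_le => i; apply: enorm_dot. Qed.

Lemma cnorm_sub_le y z : cnorm y <= cnorm (csub y z) + cnorm z.
Proof.
rewrite (cnorm_ext (z := fun i k => csub y z i k + z i k)) => [|i k]; last by rewrite /csub; ring.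
exact: cnorm_triangle.
Qed.

Lemma rsum_tnorm2 Le y z :
  rsum (fun l => tnorm2 Le (y l) (z l)) = cnorm y ^ 2 + / Le * cnorm z ^ 2.
Proof.
rewrite !cnorm_sq -rsum_scal -rsum_plus; apply: rsum_ext => l.
by rewrite /tnorm2 /sqnorm; congr (_ + / Le * _); apply: rsum_ext => k; ring.
Qed.

End ConfigNorm.

(** * Mean-value inequalities *)

Lemma derive_nonpos_le (f f' : R -> R) T : 0 <= T ->
  (forall s, 0 <= s <= T -> is_derive f s (f' s)) ->
  (forall s, 0 <= s <= T -> f' s <= 0) -> f T <= f 0.
Proof.
move=> T0 df f'_le0.
have [c []] : exists c, Rmin 0 T <= c <= Rmax 0 T /\ f T - f 0 = f' c * (T - 0).
  apply: MVT_gen => s; rewrite Rmin_left // Rmax_right // => sT.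
    by apply: df; lra.
  by apply/continuity_pt_filterlim/ex_derive_continuous; exists (f' s); apply: df.
rewrite Rmin_left // Rmax_right // => cT; have := f'_le0 c cT; nra.
Qed.

Lemma is_derive_min0 (f : R -> R) l : (forall t, f 0 <= f t) -> is_derive f 0 l -> l = 0.
Proof.
move=> fmin /is_derive_Reals df.
have pr : derivable_pt f 0 by exists l.
rewrite -(derive_pt_eq_0 _ _ _ pr df).
by apply: (deriv_minimum _ (-1) 1) => [||x _ _]; [lra | lra | apply: fmin].
Qed.

Lemma lipschitz_continuous (f : R -> R) C s : 0 <= C ->
  (forall s s', Rabs (f s - f s') <= C * Rabs (s - s')) -> continuous f s.
Proof.
move=> C0 flip; apply/filterlim_locally => e.
have Cpos : 0 < C + 1 by lra.
have de : 0 < e / (C + 1) by apply: Rdiv_lt_0_compat => //; apply: cond_pos.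
exists (mkposreal _ de) => s' /= ss'.
apply: Rle_lt_trans (flip s' s) _.
have : C * Rabs (s' - s) <= C * (e / (C + 1)).
  by apply: Rmult_le_compat_l => //; apply: Rlt_le.
have : C * (e / (C + 1)) < e.
  by rewrite (_ : C * (e / (C + 1)) = e - e / (C + 1)); [lra | field; lra].
lra.
Qed.

Section MeanValueInequality.
Variables N d : nat.

Lemma is_derive_cdot_l (g : R -> config N d) (g' : config N d) (z : config N d) t :
  (forall i k, is_derive (fun s => g s i k) t (g' i k)) ->
  is_derive (fun s => cdot (g s) z) t (cdot g' z).
Proof.
move=> dg; apply: (is_derive_rsum (F := fun i s => rsum (fun k => g s i k * z i k))) => i.
apply: (is_derive_rsum (F := fun k s => g s i k * z i k)) => k.
exact: (is_derive_scal_l _ _ _ (z i k) (dg i k)).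
Qed.

Lemma cnorm_le_of_derive (g g' : R -> config N d) (b b' : R -> R) T : 0 <= T ->
  (forall i k, g 0 i k = 0) ->
  (forall s, 0 <= s <= T -> forall i k, is_derive (fun s => g s i k) s (g' s i k)) ->
  (forall s, 0 <= s <= T -> is_derive b s (b' s)) ->
  (forall s, 0 <= s <= T -> cnorm (g' s) <= b' s) ->
  cnorm (g T) <= b T - b 0.
Proof.
move=> T0 g0 dg db g'_le.
set D := g T; have D0 := cnorm_ge0 D.
have b_incr : b 0 <= b T.
  suff : - b T <= - b 0 by lra.
  apply: (derive_nonpos_le (f := fun s => - b s) (f' := fun s => - b' s)) => // s sT.
    exact/is_derive_opp/db.
  by have := g'_le s sT; have := cnorm_ge0 (g' s); lra.
(* Pairing with the final value: s |-> <g s, g T> - b s |g T| is nonincreasing. *)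
have energy : cdot (g T) D - b T * cnorm D <= cdot (g 0) D - b 0 * cnorm D.
  apply: (derive_nonpos_le (f := fun s => cdot (g s) D - b s * cnorm D)
                           (f' := fun s => cdot (g' s) D - b' s * cnorm D)) => // s sT.
    apply: is_derive_minus; first by apply: is_derive_cdot_l; apply: dg.
    exact: (is_derive_scal_l _ _ _ (cnorm D) (db s sT)).
  by have := cdot_le (g' s) D; have := g'_le s sT; nra.
have : cdot (g 0) D = 0.
  by rewrite /cdot (rsum_ext (g := fun _ => 0)) ?rsum_const ?Rmult_0_r // => i;
    rewrite (rsum_ext (g := fun _ => 0)) ?rsum_const ?Rmult_0_r // => k; rewrite g0 Rmult_0_l.
rewrite -/D -cnorm_sq in energy *; nra.
Qed.

Lemma cnorm_attains_max (g g' : R -> config N d) T : 0 <= T ->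
  (forall s i k, is_derive (fun s => g s i k) s (g' s i k)) ->
  exists s0, 0 <= s0 <= T /\ forall s, 0 <= s <= T -> cnorm (g s) <= cnorm (g s0).
Proof.
move=> T0 dg.
have cont s : continuity_pt (fun s => cdot (g s) (g s)) s.
  apply/continuity_pt_filterlim/ex_derive_continuous; eexists.
  apply: is_derive_rsum => i; apply: is_derive_rsum => k.
  by apply: (is_derive_mult (fun s => g s i k) (fun s => g s i k)) => // ??; apply: Rmult_comm.
have [s0 [s0max s0T]] := continuity_ab_maj _ 0 T T0 (fun s _ => cont s).
exists s0; split => // s sT.
by rewrite -(sqrt_pow2 _ (cnorm_ge0 (g s))) -(sqrt_pow2 _ (cnorm_ge0 (g s0))) !cnorm_sq;
  apply/sqrt_le_1_alt/s0max.
Qed.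

End MeanValueInequality.

Lemma is_derive_diag (G g : R -> R -> R) C l : 0 <= C ->
  (forall u s, is_derive (fun u => G u s) u (g u s)) ->
  (forall u s, Rabs (g u s - g 0 0) <= C * (Rabs u + Rabs s)) ->
  is_derive (fun s => G 0 s) 0 l ->
  is_derive (fun t => G t t) 0 (g 0 0 + l).
Proof.
move=> C0 dG glip /is_derive_Reals dG0; apply/is_derive_Reals => e e0.
have [del2 Hdel2] := dG0 (e / 2) ltac:(lra).
have de : 0 < e / (4 * C + 1) by apply: Rdiv_lt_0_compat; lra.
have dmin : 0 < Rmin del2 (e / (4 * C + 1)) by apply: Rmin_pos => //; apply: cond_pos.
exists (mkposreal _ dmin) => t t0 /= tdel.
have t_del2 : Rabs t < del2 by apply: Rlt_le_trans tdel (Rmin_l _ _).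
have t_small : Rabs t < e / (4 * C + 1) by apply: Rlt_le_trans tdel (Rmin_r _ _).
have := Hdel2 t t0 t_del2; rewrite !Rplus_0_l => G0t.
have [c [mvt ct]] := MVT_cor4 (fun u => G u t) (fun u => g u t) 0 (Rabs t)
  (fun c _ => dG c t) t ltac:(rewrite Rminus_0_r; lra).
rewrite !Rminus_0_r in mvt ct.
have gct : Rabs (g c t - g 0 0) <= 2 * C * Rabs t by have := glip c t; nra.
have -> : (G t t - G 0 0) / t - (g 0 0 + l) = (g c t - g 0 0) + ((G 0 t - G 0 0) / t - l).
  by rewrite (_ : G t t = g c t * t + G 0 t); [field | lra].
apply: Rle_lt_trans (Rabs_triang _ _) _.
have : 2 * C * Rabs t <= 2 * C * (e / (4 * C + 1)) by apply: Rmult_le_compat_l; lra.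
have : 2 * C * (e / (4 * C + 1)) <= e / 2.
  rewrite (_ : 2 * C * (e / (4 * C + 1)) = e / 2 - e / (2 * (4 * C + 1))); last by field; lra.
  have : 0 < e / (2 * (4 * C + 1)) by apply: Rdiv_lt_0_compat; lra.
  lra.
lra.
Qed.

(** * The gradient of the mean-field potential *)

Lemma INR_ord_neq0 N (i : 'I_N) : INR N <> 0.
Proof.
have N_gt0 : (0 < N)%nat by apply: leq_ltn_trans (leq0n _) (ltn_ord i).
by apply: not_0_INR => N0; move: N_gt0; rewrite N0.
Qed.

Section Shift.
Variable d : nat.
Implicit Types a : vec d.

Lemma shift0 a k : shift a k 0 = a.
Proof.
by apply: functional_extensionality => j; rewrite /shift; case: (j == k); rewrite ?Rplus_0_r.
Qed.

Lemma shift_shift a k s t : shift (shift a k s) k t = shift a k (s + t).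
Proof.
by apply: functional_extensionality => j; rewrite /shift; case: (j == k); rewrite ?Rplus_assoc.
Qed.

Lemma enorm_shift a k u : enorm (vsub (shift a k u) a) = Rabs u.
Proof.
rewrite /enorm /sqnorm (rsum_ext (g := fun j => if j == k then u ^ 2 else 0)).
  by rewrite (rsum_delta k (fun _ => u ^ 2)) sqrt_pow2_abs.
by move=> j; rewrite /vsub /shift; case: (j == k); ring.
Qed.

Lemma is_derive_shift (f : vec d -> R) a k s :
  (forall y, ex_derive (fun t => f (shift y k t)) 0) ->
  is_derive (fun t => f (shift a k t)) s (grad f (shift a k s) k).
Proof.
move=> f_ex.
have df : is_derive (fun u => f (shift (shift a k s) k u)) (s - s) (grad f (shift a k s) k).
  by rewrite Rminus_diag_eq //; apply: Derive_correct.
have := is_derive_comp _ (fun t => t - s) s _ _ df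
  (is_derive_minus _ _ s _ _ (is_derive_id s) (is_derive_const s s)).
rewrite /scal /= /mult /= /minus /plus /opp /one /zero /= Ropp_0 Rplus_0_r Rmult_1_l.
apply: is_derive_ext => t.
by rewrite shift_shift; congr (f (shift a k _)); ring.
Qed.

End Shift.

Definition gradU N d (eps : R) (V : vec d -> R) (W : vec d -> vec d -> R)
  (y : config N d) : config N d :=
  fun i k => grad V (y i) k + eps / INR N * rsum (fun j => grad1 W (y i) (y j) k).

Lemma cshift_row N d (y : config N d) i k t i' :
  cshift y i k t i' = if i' == i then shift (y i) k t else y i'.
Proof. by apply: functional_extensionality => k'; rewrite /cshift /shift; case: eqP => [->|]. Qed.

Section Potential.
Variables (N d : nat) (eps Lt : R) (V : vec d -> R) (W : vec d -> vec d -> R).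
Hypothesis V_ex : forall x k, ex_derive (fun t => V (shift x k t)) 0.
Hypothesis W_ex : forall x y k, ex_derive (fun t => W (shift x k t) y) 0.
Hypothesis W_sym : forall x y, W x y = W y x.
Hypothesis Lt_ge0 : 0 <= Lt.
Hypothesis W_lip : forall x y x' y',
  enorm (vsub (grad1 W x y) (grad1 W x' y')) <= Lt * (enorm (vsub x x') + enorm (vsub y y')).

Lemma is_derive_W1 a b k : is_derive (fun t => W (shift a k t) b) 0 (grad1 W a b k).
Proof.
by have := is_derive_shift (f := fun z => W z b) a 0 (fun y => W_ex y b k); rewrite shift0.
Qed.

(* Only the first-argument gradient of W is controlled; symmetry turns the derivative
   in the second argument into one in the first. *)
Lemma is_derive_W_diag a k :
  is_derive (fun t => W (shift a k t) (shift a k t)) 0 (2 * grad1 W a a k).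
Proof.
have := is_derive_diag (G := fun u s => W (shift a k u) (shift a k s))
  (g := fun u s => grad1 W (shift a k u) (shift a k s) k) (l := grad1 W a a k) Lt_ge0.
rewrite shift0 (_ : grad1 W a a k + grad1 W a a k = 2 * grad1 W a a k); last ring.
apply => [u s|u s|].
- exact: (is_derive_shift (f := fun z => W z (shift a k s))).
- apply: Rle_trans (enorm_coord (vsub (grad1 W _ _) (grad1 W a a)) k) _.
  by apply: Rle_trans (W_lip _ _ _ _) _; rewrite !enorm_shift; lra.
- apply: (is_derive_ext (fun t => W (shift a k t) a)) => [t|]; first by rewrite W_sym.
  exact: is_derive_W1.
Qed.

Lemma is_derive_W_rows (y : config N d) i k i' j :
  is_derive (fun t => W (cshift y i k t i') (cshift y i k t j)) 0
    ((if i' == i then grad1 W (y i) (y j) k else 0) +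
     (if j == i then grad1 W (y i) (y i') k else 0)).
Proof.
apply: (is_derive_ext (fun t => W (if i' == i then shift (y i) k t else y i')
                                  (if j == i then shift (y i) k t else y j))).
  by move=> t; rewrite !cshift_row.
case: (eqVneq i' i) => [ii'|_]; case: (eqVneq j i) => [ji|_] /=.
- by subst; rewrite Rplus_diag; apply: is_derive_W_diag.
- by rewrite Rplus_0_r; apply: is_derive_W1.
- by rewrite Rplus_0_l; apply: (is_derive_ext (fun t => W (shift (y i) k t) (y i'))) => [t|];
    [rewrite W_sym | apply: is_derive_W1].
- by rewrite Rplus_0_r; apply: is_derive_const.
Qed.

Lemma cgrad_Upot (y : config N d) i k : cgrad (Upot eps V W) y i k = gradU eps V W y i k.
Proof.
apply: is_derive_unique.
set S := rsum (fun j => grad1 W (y i) (y j) k).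
have dV i' : is_derive (fun t => V (cshift y i k t i')) 0 (if i' == i then grad V (y i) k else 0).
  apply: (is_derive_ext (fun t => V (if i' == i then shift (y i) k t else y i'))).
    by move=> t; rewrite cshift_row.
  case: (i' == i); last exact: is_derive_const.
  by have := is_derive_shift (y i) 0 (V_ex^~ k); rewrite shift0.
set c := eps / (2 * INR N).
have dU := is_derive_rsum (F := fun i' t => V (cshift y i k t i') +
    c * rsum (fun j => W (cshift y i k t i') (cshift y i k t j))) (t := 0)
  (fun i' => is_derive_plus _ _ _ _ _ (dV i') (is_derive_scal _ _ c _
     (is_derive_rsum (F := fun j t => W (cshift y i k t i') (cshift y i k t j))
        (is_derive_W_rows y i k i')))).
suff -> : gradU eps V W y i k = rsum (fun i' => (if i' == i then grad V (y i) k else 0) +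
    c * rsum (fun j => (if i' == i then grad1 W (y i) (y j) k else 0) +
                       (if j == i then grad1 W (y i) (y i') k else 0)))
  by exact: dU.
rewrite rsum_plus rsum_delta rsum_scal.
rewrite (rsum_ext (g := fun i' => (if i' == i then S else 0) + grad1 W (y i) (y i') k)).
  rewrite rsum_plus rsum_delta /gradU -/S /c; field; exact: INR_ord_neq0 i.
move=> i'; rewrite rsum_plus (rsum_delta i (fun _ => grad1 W (y i) (y i') k)).
by case: (i' == i); rewrite // rsum_const Rmult_0_r.
Qed.

Variable L : R.
Hypothesis eps_ge0 : 0 <= eps.
Hypothesis L_ge0 : 0 <= L.
Hypothesis V_lip : forall x y, enorm (vsub (grad V x) (grad V y)) <= L * enorm (vsub x y).

Lemma gradU_row_lipschitz (y z : config N d) i :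
  enorm (csub (gradU eps V W y) (gradU eps V W z) i) <=
  (L + eps * Lt) * enorm (vsub (y i) (z i)) +
  eps * Lt / INR N * rsum (fun j => enorm (vsub (y j) (z j))).
Proof.
set e := fun j => enorm (vsub (y j) (z j)); set S := rsum e.
rewrite (enorm_ext (b := fun k => vsub (grad V (y i)) (grad V (z i)) k + eps / INR N *
    rsum (fun j => vsub (grad1 W (y i) (y j)) (grad1 W (z i) (z j)) k))) => [|k]; last first.
  by rewrite /csub /gradU /vsub rsum_minus; ring.
apply: Rle_trans (enorm_triangle _ _) _.
have N_gt0 : 0 < INR N by have := pos_INR N; have := INR_ord_neq0 i; lra.
rewrite enorm_scal Rabs_pos_eq; last by apply: Rdiv_le_0_compat.
have W_part : rsum (fun j => enorm (vsub (grad1 W (y i) (y j)) (grad1 W (z i) (z j))))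
              <= INR N * (Lt * e i) + Lt * S.
  rewrite -rsum_const -rsum_scal -rsum_plus; apply: rsum_le => j.
  by apply: Rle_trans (W_lip _ _ _ _) _; rewrite /e; lra.
have := Rmult_le_compat_l (eps / INR N) _ _ (Rdiv_le_0_compat _ _ eps_ge0 N_gt0)
  (Rle_trans _ _ _ (enorm_sum _) W_part).
have := V_lip (y i) (z i).
rewrite (_ : eps / INR N * (INR N * (Lt * e i) + Lt * S) = eps * Lt * e i + eps * Lt / INR N * S);
  last by field; lra.
rewrite -/(e i); lra.
Qed.

Lemma gradU_lipschitz (y z : config N d) :
  cnorm (csub (gradU eps V W y) (gradU eps V W z)) <= (L + 2 * eps * Lt) * cnorm (csub y z).
Proof.
set e := fun i => enorm (vsub (y i) (z i)).
apply: Rle_trans (enorm_mono (b := fun i => (L + eps * Lt) * e i + eps * Lt / INR N * rsum e) _) _.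
  by move=> i; split; [apply: enorm_ge0 | apply: gradU_row_lipschitz].
rewrite (_ : L + 2 * eps * Lt = L + eps * Lt + eps * Lt); last ring.
by apply: enorm_add_mean_le => [||i]; [nra | nra | apply: enorm_ge0].
Qed.

Lemma cnorm_gradU0 : V (@vzero d) = 0 -> (forall x, 0 <= V x) ->
  cnorm (gradU eps V W (fun (_ : 'I_N) => @vzero d)) =
  sqrt (INR N) * (eps * enorm (grad1 W (@vzero d) (@vzero d))).
Proof.
move=> V0 V_ge0.
have gradV0 k : grad V (@vzero d) k = 0.
  apply: (is_derive_min0 (f := fun t => V (shift (@vzero d) k t))).
    by move=> t; rewrite shift0 V0.
  exact: Derive_correct.
rewrite /cnorm (enorm_ext (b := fun _ => eps * enorm (grad1 W (@vzero d) (@vzero d)))).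
  by rewrite enorm_const Rabs_pos_eq //; apply: Rmult_le_pos => //; apply: enorm_ge0.
move=> i; rewrite (enorm_ext (b := fun k => eps * grad1 W (@vzero d) (@vzero d) k)).
  by rewrite enorm_scal Rabs_pos_eq.
by move=> k; rewrite /gradU gradV0 rsum_const; field; apply: INR_ord_neq0 i.
Qed.

End Potential.

(** * The exact flow against the averaged integrator step *)

Definition force_integral N d (F : config N d -> config N d) (x v : config N d) (t : R)
  : config N d := fun i k => RInt (fun s => F (caxpy x s v) i k) 0 t.

Section Flow.
Variables (N d : nat) (F : config N d -> config N d) (K : R) (x v : config N d).
Hypothesis K_ge0 : 0 <= K.
Hypothesis F_lip : forall y z, cnorm (csub (F y) (F z)) <= K * cnorm (csub y z).

Local Notation Phi := (force_integral F x v).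

Lemma cnorm_sub_line s s' : cnorm (csub (caxpy x s v) (caxpy x s' v)) = Rabs (s - s') * cnorm v.
Proof. by rewrite -cnorm_scal; apply: cnorm_ext => i k; rewrite /csub /caxpy; ring. Qed.

Lemma continuous_F_line i k s : continuous (fun s => F (caxpy x s v) i k) s.
Proof.
apply: (lipschitz_continuous (C := K * cnorm v)) => [|s1 s2].
  by apply: Rmult_le_pos => //; apply: cnorm_ge0.
apply: Rle_trans (cnorm_coord (csub (F (caxpy x s1 v)) (F (caxpy x s2 v))) i k) _.
by apply: Rle_trans (F_lip _ _) _; rewrite cnorm_sub_line; apply: Req_le; ring.
Qed.

Lemma is_derive_force_integral i k t :
  is_derive (fun t => Phi t i k) t (F (caxpy x t v) i k).
Proof.
apply: (is_derive_RInt (fun s => F (caxpy x s v) i k)); last exact: continuous_F_line.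
apply: filter_forall => b; apply/RInt_correct/ex_RInt_continuous => s _.
exact: continuous_F_line.
Qed.

Lemma force_integral0 i k : Phi 0 i k = 0.
Proof. exact: RInt_point. Qed.

Lemma is_RInt_force_rescaled h i k :
  is_RInt (fun u => h * F (caxpy x (h * u) v) i k) 0 1 (Phi h i k).
Proof.
have ex : ex_RInt (fun s => F (caxpy x s v) i k) 0 h.
  by apply: ex_RInt_continuous => s _; apply: continuous_F_line.
have := is_RInt_comp_lin (fun s => F (caxpy x s v) i k) h 0 0 1 (Phi h i k).
rewrite Rmult_0_r Rmult_1_r Rplus_0_r (Rplus_0_r h) => /(_ (RInt_correct _ _ _ ex)).
by apply: is_RInt_ext => u _; rewrite Rplus_0_r.
Qed.

Lemma EPh_force_integral h i k : EPh F h x v i k = v i k - Phi h i k.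
Proof.
apply: is_RInt_unique.
have := is_RInt_minus _ _ _ _ _ _ (is_RInt_const 0 1 (v i k))
  (is_RInt_force_rescaled (h := h) (i := i) (k := k)).
by rewrite /minus /plus /opp /scal /= /mult /= Rminus_0_r Rmult_1_l.
Qed.

Lemma EQh_force_integral h i k :
  EQh F h x v i k = x i k + h * v i k - h / 2 * Phi h i k.
Proof.
apply: is_RInt_unique.
have := is_RInt_minus _ _ _ _ _ _ (is_RInt_const 0 1 (x i k + h * v i k))
  (is_RInt_scal _ _ _ (h / 2) _ (is_RInt_force_rescaled (h := h) (i := i) (k := k))).
rewrite /minus /plus /opp /scal /= /mult /= Rminus_0_r Rmult_1_l.
(* [field] rejects this goal as stated: the equality lives in the carrier of a Coquelicot
   module rather than in [R]. *)
by move=> H; apply: is_RInt_ext H => u _; apply: Rminus_diag_uniq; field.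
Qed.

Lemma force_integral_error t : 0 <= t ->
  cnorm (fun i k => Phi t i k - t * F (caxpy x t v) i k) <= K * cnorm v * t ^ 2 / 2.
Proof.
move=> t0; apply: Rle_trans (cnorm_le_of_derive
  (g := fun s i k => Phi s i k - s * F (caxpy x t v) i k)
  (g' := fun s i k => F (caxpy x s v) i k - F (caxpy x t v) i k)
  (b := fun s => - (K * cnorm v * (t - s) ^ 2 / 2)) (b' := fun s => K * cnorm v * (t - s))
  t0 _ _ _ _) _ => [i k|s _ i k|s _|s st|].
- by rewrite force_integral0; ring.
- apply: (is_derive_minus _ (fun s => s * F (caxpy x t v) i k)).
    exact: is_derive_force_integral.
  by auto_derive; first done; ring.
- by auto_derive; first done; field.
- apply: Rle_trans (F_lip _ _) _.
  by rewrite cnorm_sub_line Rabs_minus_sym Rabs_pos_eq; [apply: Req_le; ring | lra].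
- by apply: Req_le; field.
Qed.

Variables (q p : R -> config N d).
Hypothesis flow : is_flow F x v q p.

Section ForceBound.
Variable A : R.

Lemma momentum_drift t : 0 <= t -> (forall s, 0 <= s <= t -> cnorm (F (q s)) <= A) ->
  cnorm (csub (p t) v) <= A * t.
Proof.
move=> t0 FA; have [_ [p0 [_ dp]]] := flow.
apply: Rle_trans (cnorm_le_of_derive (g := fun s => csub (p s) v)
  (g' := fun s i k => - F (q s) i k) (b := fun s => A * s) (b' := fun _ => A)
  t0 _ _ _ _) _ => [i k|s _ i k|s _|s st|].
- by rewrite /csub p0; ring.
- rewrite -[X in is_derive _ _ X]Rminus_0_r.
  by apply: is_derive_minus => //; apply: is_derive_const.
- by auto_derive; first done; ring.
- rewrite (cnorm_ext (z := fun i k => -1 * F (q s) i k)) => [|i k]; last ring.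
  by rewrite cnorm_scal Rabs_m1 Rmult_1_l; apply: FA.
- by apply: Req_le; ring.
Qed.

Lemma position_drift t : 0 <= t -> (forall s, 0 <= s <= t -> cnorm (F (q s)) <= A) ->
  cnorm (fun i k => q t i k - x i k - t * v i k) <= A * t ^ 2 / 2.
Proof.
move=> t0 FA; have [q0 [_ [dq _]]] := flow.
apply: Rle_trans (cnorm_le_of_derive (g := fun s i k => q s i k - x i k - s * v i k)
  (g' := fun s => csub (p s) v) (b := fun s => A * s ^ 2 / 2) (b' := fun s => A * s)
  t0 _ _ _ _) _ => [i k|s _ i k|s _|s st|].
- by rewrite q0; ring.
- apply: (is_derive_minus _ (fun s => s * v i k)).
    rewrite -[X in is_derive _ _ X]Rminus_0_r.
    by apply: is_derive_minus => //; apply: is_derive_const.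
  by auto_derive; first done; ring.
- by auto_derive; first done; field.
- by apply: momentum_drift => [|r rs]; [lra | apply: FA; lra].
- by apply: Req_le; field.
Qed.

Lemma momentum_error t : 0 <= t -> (forall s, 0 <= s <= t -> cnorm (F (q s)) <= A) ->
  cnorm (fun i k => v i k - Phi t i k - p t i k) <= K * A * t ^ 3 / 6.
Proof.
move=> t0 FA; have [_ [p0 [_ dp]]] := flow.
apply: Rle_trans (cnorm_le_of_derive (g := fun s i k => v i k - Phi s i k - p s i k)
  (g' := fun s => csub (F (q s)) (F (caxpy x s v)))
  (b := fun s => K * A * s ^ 3 / 6) (b' := fun s => K * A * s ^ 2 / 2)
  t0 _ _ _ _) _ => [i k|s _ i k|s _|s st|].
- by rewrite force_integral0 p0; ring.
- rewrite (_ : csub _ _ i k = 0 - F (caxpy x s v) i k - - F (q s) i k); last by rewrite /csub; ring.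
  apply: is_derive_minus => //; apply: is_derive_minus; first exact: is_derive_const.
  exact: is_derive_force_integral.
- by auto_derive; first done; field.
- apply: Rle_trans (F_lip _ _) _.
  rewrite (cnorm_ext (z := fun i k => q s i k - x i k - s * v i k)) => [|i k]; last first.
    by rewrite /csub /caxpy; ring.
  have := position_drift (t := s) ltac:(lra) (fun r rs => FA r ltac:(lra)).
  by rewrite (_ : K * A * s ^ 2 / 2 = K * (A * s ^ 2 / 2)); [apply: Rmult_le_compat_l | field].
- by apply: Req_le; field.
Qed.

Lemma position_error t : 0 <= t -> (forall s, 0 <= s <= t -> cnorm (F (q s)) <= A) ->
  cnorm (fun i k => x i k + t * v i k - t / 2 * Phi t i k - q t i k)
    <= K * A * t ^ 4 / 24 + K * cnorm v * t ^ 3 / 12.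
Proof.
move=> t0 FA; have [q0 [_ [dq _]]] := flow.
apply: Rle_trans (cnorm_le_of_derive
  (g := fun s i k => x i k + s * v i k - s / 2 * Phi s i k - q s i k)
  (g' := fun s i k => (v i k - Phi s i k - p s i k) +
                      1 / 2 * (Phi s i k - s * F (caxpy x s v) i k))
  (b := fun s => K * A * s ^ 4 / 24 + K * cnorm v * s ^ 3 / 12)
  (b' := fun s => K * A * s ^ 3 / 6 + K * cnorm v * s ^ 2 / 4)
  t0 _ _ _ _) _ => [i k|s _ i k|s _|s st|].
- by rewrite force_integral0 q0; ring.
- rewrite (_ : _ + _ = v i k - (/ 2 * Phi s i k + s / 2 * F (caxpy x s v) i k) - p s i k);
    last field.
  apply: is_derive_minus => //; apply: (is_derive_minus (fun s => x i k + s * v i k)).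
    by auto_derive; first done; ring.
  apply: (is_derive_mult (fun s => s / 2) (fun s => Phi s i k)) => [||??]; last exact: Rmult_comm.
    by auto_derive; first done; field.
  exact: is_derive_force_integral.
- by auto_derive; first done; field.
- apply: Rle_trans (cnorm_triangle _ _) _.
  rewrite cnorm_scal Rabs_pos_eq; last lra.
  have := momentum_error (t := s) ltac:(lra) (fun r rs => FA r ltac:(lra)).
  have := force_integral_error (t := s) ltac:(lra); lra.
- by apply: Req_le; field.
Qed.

End ForceBound.

Variable B0 : R.
Hypothesis F0 : cnorm (F (fun _ _ => 0)) <= B0.

Lemma flow_force_bound h : 0 <= h -> exists M, 0 <= M /\
  M <= (K * (cnorm x + M) + B0) * h ^ 2 / 2 + h * cnorm v /\
  forall s, 0 <= s <= h -> cnorm (F (q s)) <= K * (cnorm x + M) + B0.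
Proof.
move=> h0; have [_ [_ [dq _]]] := flow.
have [s0 [s0h s0max]] : exists s0, 0 <= s0 <= h /\
    forall s, 0 <= s <= h -> cnorm (csub (q s) x) <= cnorm (csub (q s0) x).
  apply: (cnorm_attains_max (g' := p)) => // s i k.
  by rewrite -[p s i k]Rminus_0_r; apply: is_derive_minus => //; apply: is_derive_const.
set M := cnorm (csub (q s0) x); set A := K * (cnorm x + M) + B0.
have F_bound s : 0 <= s <= h -> cnorm (F (q s)) <= A.
  move=> sh.
  have q_near : cnorm (q s) <= cnorm x + M.
    by have := cnorm_sub_le (q s) x; have := s0max s sh; rewrite -/M; lra.
  have := F_lip (q s) (fun _ _ => 0).
  have -> : cnorm (csub (q s) (fun _ _ => 0)) = cnorm (q s).
    by apply: cnorm_ext => i k; rewrite /csub /=; ring.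
  by have := cnorm_sub_le (F (q s)) (F (fun _ _ => 0)); rewrite /A; nra.
have A_ge0 : 0 <= A by have := F_bound 0 ltac:(lra); have := cnorm_ge0 (F (q 0)); lra.
exists M; split; first exact: cnorm_ge0.
split=> //.
have drift : cnorm (csub (csub (q s0) x) (fun i k => s0 * v i k)) <= A * s0 ^ 2 / 2
  := position_drift (proj1 s0h) (fun s ss0 => F_bound s ltac:(lra)).
have : M <= A * s0 ^ 2 / 2 + s0 * cnorm v.
  have := cnorm_sub_le (csub (q s0) x) (fun i k => s0 * v i k).
  by rewrite cnorm_scal Rabs_pos_eq -/M; lra.
have : A * s0 ^ 2 / 2 <= A * h ^ 2 / 2.
  by apply/Rmult_le_compat_r/Rmult_le_compat_l/pow_incr; lra.
have := cnorm_ge0 v; rewrite -/A; nra.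
Qed.

End Flow.

(** * Collecting the constants *)

(* Dimensionless form: [t = sqrt(Le) h], [Y = |v| / sqrt(Le)], [b = B0 / Le]. *)
Lemma error_bound_scaled t X Y b M : 0 < t -> t ^ 2 <= 1 / 9 ->
  0 <= X -> 0 <= Y -> 0 <= b -> 0 <= M ->
  M <= (X + M + b) * t ^ 2 / 2 + t * Y ->
  (t ^ 4 * (X + M + b) / 24 + t ^ 3 * Y / 12) ^ 2 + (t ^ 3 * (X + M + b) / 6) ^ 2
    <= 7 * t ^ 6 * (X ^ 2 + Y ^ 2 + b ^ 2 / 3).
Proof.
move=> t0 t2 X0 Y0 b0 M0 Mle.
have t3 : t <= 1 / 3 by nra.
have tY : t * Y <= Y / 3 by nra.
have M_le : M <= (X + b) / 17 + 6 * Y / 17.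
  have : (X + M + b) * t ^ 2 <= (X + M + b) / 9 by nra.
  lra.
have [Z Zdef] : exists Z, Z = X + M + b by eexists.
have [U Udef] : exists U, U = X + Y + b by eexists.
rewrite -Zdef.
have Z_le : 0 <= Z <= 11 / 10 * U by lra.
have U_sq : U ^ 2 <= 3 * (X ^ 2 + Y ^ 2 + b ^ 2).
  have := pow2_ge_0 (X - Y); have := pow2_ge_0 (Y - b); have := pow2_ge_0 (X - b).
  rewrite Udef; nra.
have tZ : 0 <= t * Z <= Z / 3 by split; nra.
have E_sq : (t * Z / 24 + Y / 12) ^ 2 <= U ^ 2 / 100.
  have : 0 <= t * Z / 24 + Y / 12 <= U / 10 by lra.
  nra.
have Z_sq : Z ^ 2 <= 121 / 100 * U ^ 2 by nra.
rewrite (_ : _ + _ = t ^ 6 * ((t * Z / 24 + Y / 12) ^ 2 + Z ^ 2 / 36)); last field.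
rewrite (_ : 7 * t ^ 6 * _ = t ^ 6 * (7 * (X ^ 2 + Y ^ 2 + b ^ 2 / 3))); last ring.
apply: Rmult_le_compat_l; first by apply: pow_le; lra.
nra.
Qed.

Lemma error_bound Le h X Y B0 M EQ EP : 0 < Le -> 0 < h -> Le * h ^ 2 <= 1 / 9 ->
  0 <= X -> 0 <= Y -> 0 <= B0 -> 0 <= M -> 0 <= EQ -> 0 <= EP ->
  M <= (Le * (X + M) + B0) * h ^ 2 / 2 + h * Y ->
  EP <= Le * (Le * (X + M) + B0) * h ^ 3 / 6 ->
  EQ <= Le * (Le * (X + M) + B0) * h ^ 4 / 24 + Le * Y * h ^ 3 / 12 ->
  EQ ^ 2 + / Le * EP ^ 2 <= 7 * (Le * h ^ 2) ^ 3 * (X ^ 2 + / Le * Y ^ 2 + B0 ^ 2 / (3 * Le ^ 2)).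
Proof.
move=> Le0 h0 Leh X0 Y0 B00 M0 EQ0 EP0 Mle EPle EQle.
have [w [w0 Lew]] : exists w, 0 < w /\ Le = w ^ 2.
  exists (sqrt Le); split; first exact: sqrt_lt_R0.
  by rewrite pow2_sqrt //; lra.
rewrite Lew in Leh Mle EPle EQle *.
have [t tdef] : exists t, t = w * h by eexists.
have t0 : 0 < t by rewrite tdef; nra.
have t2 : t ^ 2 <= 1 / 9 by rewrite tdef Rpow_mult_distr; lra.
have Yw : 0 <= Y / w by apply: Rdiv_le_0_compat.
have bw : 0 <= B0 / w ^ 2 by apply: Rdiv_le_0_compat; nra.
have := error_bound_scaled t0 t2 X0 Yw bw M0.
have -> : (X + M + B0 / w ^ 2) * t ^ 2 / 2 + t * (Y / w) =
          (w ^ 2 * (X + M) + B0) * h ^ 2 / 2 + h * Y by rewrite tdef; field; lra.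
move=> /(_ Mle).
have EQ_sq : EQ ^ 2 <= (t ^ 4 * (X + M + B0 / w ^ 2) / 24 + t ^ 3 * (Y / w) / 12) ^ 2.
  apply: pow_incr; split => //; apply: Rle_trans EQle _; apply: Req_le.
  by rewrite tdef; field; lra.
have EP_sq : / w ^ 2 * EP ^ 2 <= (t ^ 3 * (X + M + B0 / w ^ 2) / 6) ^ 2.
  rewrite (_ : (t ^ 3 * _ / 6) ^ 2 = / w ^ 2 * (w ^ 2 * (w ^ 2 * (X + M) + B0) * h ^ 3 / 6) ^ 2);
    last by rewrite tdef; field; lra.
  apply: Rmult_le_compat_l; first by apply/Rlt_le/Rinv_0_lt_compat; nra.
  by apply: pow_incr.
rewrite (_ : 7 * _ * _ = 7 * t ^ 6 * (X ^ 2 + (Y / w) ^ 2 + (B0 / w ^ 2) ^ 2 / 3));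
  last by rewrite tdef; field; lra.
lra.
Qed.

Theorem mainTheorem14 (d N : nat) (eps L Lt h : R)
  (V : vec d -> R) (W : vec d -> vec d -> R) :
  0 <= eps -> 0 < L -> 0 <= Lt ->
  isC1 V -> isC1_2 W ->
  V (@vzero d) = 0 -> (forall x, 0 <= V x) ->
  (forall x y, enorm (vsub (grad V x) (grad V y)) <= L * enorm (vsub x y)) ->
  (forall x y, W x y = W y x) ->
  (forall x y x' y', enorm (vsub (grad1 W x y) (grad1 W x' y'))
                     <= Lt * (enorm (vsub x x') + enorm (vsub y y'))) ->
  0 < h -> (L + 2 * eps * Lt) * h ^ 2 <= 1 / 9 ->
  forall (x v : config N d) (q p : R -> config N d),
  is_flow (cgrad (Upot eps V W)) x v q p ->
  let Le := L + 2 * eps * Lt in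
  let W0 := enorm (grad1 W (@vzero d) (@vzero d)) in
  rsum (fun l => tnorm2 Le
          (vsub (EQh (cgrad (Upot eps V W)) h x v l) (q h l))
          (vsub (EPh (cgrad (Upot eps V W)) h x v l) (p h l)))
  <= 7 * (Le * h ^ 2) ^ 3 *
     rsum (fun l => tnorm2 Le (x l) (v l) + 1 / 3 * / Le ^ 2 * eps ^ 2 * W0 ^ 2).
Proof.
move=> eps0 L0 Lt0 [V_ex _] [W_ex _] V0 V_ge0 V_lip W_sym W_lip h0 Leh x v q p flow Le W0.
set F := cgrad (Upot eps V W).
have FE y : F y = gradU eps V W y.
  apply: functional_extensionality => i; apply: functional_extensionality => k.
  exact: (cgrad_Upot eps V_ex W_ex W_sym Lt0 W_lip).
have Le0 : 0 < Le by rewrite /Le; nra.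
have Le_ge0 := Rlt_le _ _ Le0.
have h_ge0 := Rlt_le _ _ h0.
have F_lip y z : cnorm (csub (F y) (F z)) <= Le * cnorm (csub y z).
  by rewrite !FE; apply: gradU_lipschitz => //; lra.
set B0 := sqrt (INR N) * (eps * W0).
have B00 : 0 <= B0 by apply/Rmult_le_pos/Rmult_le_pos/enorm_ge0 => //; apply: sqrt_pos.
have F0 : cnorm (F (fun _ _ => 0)) <= B0 by rewrite FE cnorm_gradU0 //; apply: Rle_refl.
have [M [M0 [Mle FA]]] := flow_force_bound Le_ge0 F_lip flow F0 h_ge0.
have EQhE := EQh_force_integral x v Le_ge0 F_lip.
have EPhE := EPh_force_integral x v Le_ge0 F_lip.
rewrite rsum_tnorm2 rsum_plus rsum_tnorm2 rsum_const.
rewrite (cnorm_ext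
  (z := fun i k => x i k + h * v i k - h / 2 * force_integral F x v h i k - q h i k));
  last by move=> i k; rewrite /vsub EQhE.
rewrite (cnorm_ext (y := fun l => vsub (EPh F h x v l) (p h l))
                   (z := fun i k => v i k - force_integral F x v h i k - p h i k));
  last by move=> i k; rewrite /vsub EPhE.
have -> : INR N * (1 / 3 * / Le ^ 2 * eps ^ 2 * W0 ^ 2) = B0 ^ 2 / (3 * Le ^ 2).
  by rewrite /B0 Rpow_mult_distr pow2_sqrt; [field; lra | apply: pos_INR].
apply: (error_bound (M := M)) => //; try exact: cnorm_ge0.
- exact: (momentum_error Le_ge0 F_lip flow h_ge0 FA).
- exact: (position_error Le_ge0 F_lip flow h_ge0 FA).
Qed.
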